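(* Let $\mathcal{O}\subset\mathbb{R}^n$ be open and let $Y_1,\dots,Y_k$ be Lipschitz vector fields on $\mathcal{O}$ satisfying $[Y_i,Y_j]=0$ (almost everywhere) for $1\le i,j\le k$. Let $K\subset\mathcal{O}$ be compact and $\delta>0$, and let $y=y(t,x_0)=y(t_1,\dots,t_k,x_0)$, defined for $x_0\in K$ and $|t_j|<\delta$, be the solution of $$\frac{\partial y}{\partial t_j}=Y_j(y),\quad 1\le j\le k,\qquad y(0,x_0)=x_0,$$ which is Lipschitz in $(t,x_0)$. Then for each $j\in\{1,\dots,k\}$, $\frac{\partial}{\partial t_j}y(t,x)$ is Lipschitz in $(t,x)$.
   Context: For Lipschitz vector fields the bracket $[Y_i,Y_j]$ has $L^\infty$ coefficients and the condition $[Y_i,Y_j]=0$ is understood almost everywhere. For such commuting Lipschitz vector fields, for every compact $K\subset\mathcal{O}$ there is $\delta>0$ such that a unique solution $y$ of the stated system exists for $x_0\in K$, $|t_j|<\delta$, and it is Lipschitz in $(t,x_0)$. *)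

From HB Require Import structures.
From mathcomp Require Import all_boot all_order all_algebra.
From mathcomp Require Import all_classical all_reals all_analysis.
Set Implicit Arguments. Unset Strict Implicit. Unset Printing Implicit Defensive.
Import Order.TTheory GRing.Theory Num.Theory.
Import numFieldNormedType.Exports.
Local Open Scope classical_set_scope.
Local Open Scope ring_scope.

Definition rbox (R : realType) (n : nat) (a b : 'rV[R]_n) : set 'rV[R]_n :=
  [set x | forall j : 'I_n, a 0 j <= x 0 j <= b 0 j].

Definition lebesgue_null (R : realType) (n : nat) (N : set 'rV[R]_n) : Prop :=
  forall eps : R, 0 < eps ->
  exists a b : nat -> 'rV[R]_n,
    (forall i (j : 'I_n), a i 0 j <= b i 0 j) /\
    N `<=` \bigcup_i rbox (a i) (b i) /\
    (forall m : nat, \sum_(i < m) \prod_(j < n) (b i 0 j - a i 0 j) <= eps).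

Definition ae_in (R : realType) (n : nat) (A : set 'rV[R]_n)
  (P : 'rV[R]_n -> Prop) : Prop :=
  exists N : set 'rV[R]_n, lebesgue_null N /\ forall x, A x -> ~ N x -> P x.

(* The Lie bracket [X, Y](x) = DY(x) X(x) - DX(x) Y(x), where D is the
   (Frechet) differential; it is meaningful at points where X and Y are
   differentiable (almost everywhere for Lipschitz fields, Rademacher). *)
Definition lie_bracket (R : realType) (n : nat) (X Y : 'rV[R]_n -> 'rV[R]_n)
  (x : 'rV[R]_n) : 'rV[R]_n :=
  'd Y x (X x) - 'd X x (Y x).

Definition bracket_vanishes_ae (R : realType) (n : nat) (O : set 'rV[R]_n)
  (X Y : 'rV[R]_n -> 'rV[R]_n) : Prop :=
  ae_in O (fun x => differentiable X x /\ differentiable Y x /\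
                    lie_bracket X Y x = 0).

Definition param_dom (R : realType) (k n : nat) (K : set 'rV[R]_n) (delta : R)
  : set ('rV[R]_k * 'rV[R]_n) :=
  [set p : 'rV[R]_k * 'rV[R]_n | (forall j : 'I_k, `|p.1 0 j| < delta) /\ K p.2].

Definition ej (R : realType) (k : nat) (j : 'I_k) : 'rV[R]_k := delta_mx 0 j.

From HB Require Import structures.
From mathcomp Require Import all_boot all_order all_algebra.
From mathcomp Require Import all_classical all_reals all_analysis.
Import Order.TTheory GRing.Theory Num.Theory.
Import numFieldNormedType.Exports.
Local Open Scope classical_set_scope.
Local Open Scope ring_scope.

(* Since [D_j y = Y_j o y] on the parameter domain, the derivative is a
   composition of two Lipschitz maps. *)

Section LipschitzOn.
Variables (K : numFieldType) (U V W : normedModType K).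

Lemma eq_lipschitz_in (A : set U) (f g : U -> V) :
  (forall x, A x -> f x = g x) ->
  [lipschitz f x | x in A] -> [lipschitz g x | x in A].
Proof.
move=> fg [M0 [M0_real fM]]; exists M0; split=> // M /fM fM_lip.
move=> [x x'] [/= Ax Ax'].
by rewrite -(fg x Ax) -(fg x' Ax'); exact: (fM_lip (x, x')).
Qed.

Lemma lipschitz_comp (A : set U) (B : set V) (g : U -> V) (f : V -> W) :
  (forall x, A x -> B (g x)) ->
  [lipschitz f x | x in B] -> [lipschitz g x | x in A] ->
  [lipschitz f (g x) | x in A].
Proof.
move=> gAB /pinfty_ex_gt0[a a_gt0 fa] /pinfty_ex_gt0[b b_gt0 gb].
rewrite /lipschitz_on; near=> M => -[x x'] [/= Ax Ax'].
have f_bound : `|f (g x) - f (g x')| <= a * `|g x - g x'|.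
  exact: (fa (g x, g x') (conj (gAB x Ax) (gAB x' Ax'))).
have g_bound : `|g x - g x'| <= b * `|x - x'|.
  exact: (gb (x, x') (conj Ax Ax')).
apply: (le_trans f_bound).
apply: (le_trans (ler_wpM2l (ltW a_gt0) g_bound)).
rewrite mulrA ler_wpM2r //; near: M.
by apply: nbhs_pinfty_ge; rewrite gtr0_real ?mulr_gt0.
Unshelve. all: by end_near.
Qed.

End LipschitzOn.

Theorem corollary2p2 (R : realType) (n k : nat) (O : set 'rV[R]_n)
  (Y : 'I_k -> 'rV[R]_n -> 'rV[R]_n) (K : set 'rV[R]_n) (delta : R)
  (y : 'rV[R]_k -> 'rV[R]_n -> 'rV[R]_n) :
  open O ->
  (forall i : 'I_k, [lipschitz Y i x | x in O]) ->
  (forall i j : 'I_k, bracket_vanishes_ae O (Y i) (Y j)) ->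
  compact K -> K `<=` O ->
  0 < delta ->
  (forall x0, K x0 -> y 0 x0 = x0) ->
  (forall p, @param_dom R k n K delta p -> O (y p.1 p.2)) ->
  (forall p, @param_dom R k n K delta p -> forall j : 'I_k,
      derivable (fun t => y t p.2) p.1 (@ej R k j) /\
      'D_(@ej R k j) (fun t => y t p.2) p.1 = Y j (y p.1 p.2)) ->
  [lipschitz y p.1 p.2 | p in @param_dom R k n K delta] ->
  forall j : 'I_k,
    [lipschitz 'D_(@ej R k j) (fun t => y t p.2) p.1 | p in @param_dom R k n K delta].
Proof.
move=> _ lipY _ _ _ _ _ y_in_O y_flow lipy j.
apply: (@eq_lipschitz_in _ _ _ _ (fun p => Y j (y p.1 p.2))).
  by move=> p dom_p; rewrite (proj2 (y_flow p dom_p j)).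
exact: lipschitz_comp y_in_O (lipY j) lipy.
Qed.
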